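(* Let $G$ and $H$ be finite abelian groups. Then $G\cong H$ if and only if there exists an integer $n\geq 2$ such that the subgroup lattices $L(G^n)$ and $L(H^n)$ are isomorphic as lattices.
   Context: For a group $K$, $L(K)$ denotes the lattice of all subgroups of $K$ ordered by inclusion, and $K^n$ denotes the direct product of $n$ copies of $K$. *)

From HB Require Import structures.
From mathcomp Require Import all_boot all_fingroup.
Set Implicit Arguments. Unset Strict Implicit. Unset Printing Implicit Defensive.
Local Open Scope group_scope.

(* The n-fold direct power G^n of a group G : {group gT}, realized inside the
   finGroupType {dffun 'I_n -> gT} (pointwise product, from gproduct.v). *)
Definition gpow (gT : finGroupType) (G : {group gT}) (n : nat)
  : {group {dffun forall i : 'I_n, gT}} :=
  setXn_group (fun _ : 'I_n => G).

Definition subgroup_lattice_iso (aT bT : finGroupType)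
    (A : {group aT}) (B : {group bT}) : Prop :=
  exists f : {group aT} -> {group bT},
    [/\ {in subgroups A &, injective f},
        f @: subgroups A = subgroups B,
        {in subgroups A &, forall K L : {group aT}, f (K :&: L)%G = (f K :&: f L)%G}
      & {in subgroups A &, forall K L : {group aT}, f (K <*> L)%G = (f K <*> f L)%G}].

From HB Require Import structures.
From mathcomp Require Import all_boot all_fingroup all_solvable.
Set Implicit Arguments. Unset Strict Implicit. Unset Printing Implicit Defensive.

(* A lattice isomorphism preserves the number of subgroups of every subgroup,
   hence the subgroups of prime order (those with exactly two subgroups), the
   subgroups whose subgroups form a chain, and the number of subgroups of prime
   order of a join.  In an abelian group two distinct subgroups of order p
   generate a group with p + 1 subgroups of prime order, while subgroups of
   distinct prime orders generate one with only two.  When n >= 2 every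
   subgroup of prime order of G^n has a distinct twin of the same order, so the
   lattice of G^n determines the order of each of its atoms, and with it the
   cyclic subgroups of order p^j: the chains with j + 1 elements whose atoms
   have order p.  Counting elements by the cyclic subgroup they generate, the
   number of x in G^n with x^(p^k) = 1, which is the n-th power of the same
   number for G, is then a lattice invariant.  For abelian G these numbers
   determine the orders of the Omega subgroups of the p-parts, hence the
   abelian type of G. *)

Lemma count_leq_mem_ltn (v : nat) (s : seq nat) :
  count (leq v) s = count_mem v s + count (ltn v) s.
Proof.
by elim: s => //= a s ->; case: ltngtP => //= _; rewrite addnCA.
Qed.

Lemma perm_eq_count_ltn (s t : seq nat) : size s = size t ->
  (forall e, count (ltn e) s = count (ltn e) t) -> perm_eq s t.
Proof.
move=> eq_sz eq_gt; apply/allP => v _; apply/eqP.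
have eq_ge : count (leq v) s = count (leq v) t.
  by case: v => [|v]; rewrite ?eq_gt // !(@eq_count _ _ predT) ?count_predT.
by apply/eqP; rewrite -(eqn_add2r (count (ltn v) s)) {2}eq_gt -!count_leq_mem_ltn eq_ge.
Qed.

Lemma sorted_dvdn_logn p (s : seq nat) : all [pred m | 0 < m] s ->
  sorted [rel m n | n %| m] s -> sorted geq (map (logn p) s).
Proof. by apply: homo_sorted_in => m n /= m_gt0 _; apply: dvdn_leq_log. Qed.

Lemma dvdn_sorted_eq (s t : seq nat) :
    all [pred m | 0 < m] s -> all [pred m | 0 < m] t ->
    sorted [rel m n | n %| m] s -> sorted [rel m n | n %| m] t -> size s = size t ->
    (forall p e, prime p ->
       count [pred m | e < logn p m] s = count [pred m | e < logn p m] t) ->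
  s = t.
Proof.
move=> s_gt0 t_gt0 s_dvd t_dvd eq_sz eq_cnt.
have geq_trans : transitive geq by move=> m n r /= le_mn le_rm; apply: leq_trans le_rm le_mn.
have geq_anti : antisymmetric geq by move=> m n; rewrite andbC => /anti_leq.
have eq_logn p : prime p -> map (logn p) s = map (logn p) t.
  move=> p_pr; apply: (sorted_eq geq_trans geq_anti); rewrite ?sorted_dvdn_logn //.
  by apply: perm_eq_count_ltn => [|e]; rewrite ?size_map // !count_map eq_cnt.
apply: (eq_from_nth (x0 := 1)) => // i lt_i_s.
have lt_i_t : i < size t by rewrite -eq_sz.
apply: eqn_from_log; [exact: (all_nthP 1 s_gt0) | exact: (all_nthP 1 t_gt0) | move=> p].
have [p_pr | not_pr] := boolP (prime p); last first.
  have logn0 (m : nat) : logn p m = 0 by rewrite lognE (negPf not_pr).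
  by rewrite !logn0.
by rewrite -!(nth_map 1 0 (logn p)) ?eq_logn.
Qed.

Local Open Scope group_scope.

Lemma eq_rank (gT hT : finGroupType) (G : {group gT}) (H : {group hT}) :
  (forall p, prime p -> 'r_p(G) = 'r_p(H)) -> 'r(G) = 'r(H).
Proof.
move=> eq_rp; have [p p_pr rG] := rank_witness G; have [q q_pr rH] := rank_witness H.
by apply/eqP; rewrite eqn_leq {1}rG {2}rH eq_rp // -(eq_rp q) // !p_rank_le_rank.
Qed.

Lemma count_logn_abelian_type (gT : finGroupType) (G : {group gT}) p e : abelian G ->
  count [pred m | e < logn p m] (abelian_type G)
    = logn p #|'Ohm_e.+1(G)| - logn p #|'Ohm_e(G)|.
Proof.
move=> cGG; have [b defG <-] := abelian_structure cGG.
rewrite count_map (count_logn_dprod_cycle _ _ defG) -divgS ?Ohm_leq //.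
by rewrite logn_div ?cardSg ?Ohm_leq.
Qed.

Lemma abelian_isog_logn_Ohm (gT hT : finGroupType) (G : {group gT}) (H : {group hT}) :
    abelian G -> abelian H ->
    (forall p k, prime p -> logn p #|'Ohm_k(G)| = logn p #|'Ohm_k(H)|) ->
  G \isog H.
Proof.
move=> cGG cHH eq_Ohm; rewrite eq_abelian_type_isog //; apply/eqP.
have type_gt0 (rT : finGroupType) (K : {group rT}) : all [pred m | 0 < m] (abelian_type K).
  by apply: sub_all (abelian_type_gt1 K) => m /ltnW.
apply: dvdn_sorted_eq.
- exact: type_gt0.
- exact: type_gt0.
- exact: abelian_type_dvdn_sorted.
- exact: abelian_type_dvdn_sorted.
- by rewrite !size_abelian_type //; apply: eq_rank => p p_pr; rewrite !p_rank_abelian // eq_Ohm.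
by move=> p e p_pr; rewrite !count_logn_abelian_type // !eq_Ohm.
Qed.

Section AbelianOhm.
Variables (gT : finGroupType) (G : {group gT}) (p : nat).
Hypotheses (cGG : abelian G) (p_pr : prime p).

Lemma Ldiv_pcore k : 'Ldiv_(p ^ k)(G) = 'Ldiv_(p ^ k)('O_p(G)).
Proof.
have pHall := nilpotent_pcore_Hall p (abelian_nil cGG).
apply/setP => x; rewrite !inE; apply: andb_id2r => /eqP xpk.
apply/idP/idP => [Gx | /(subsetP (pcore_sub _ _))//].
rewrite (mem_Hall_pcore pHall Gx) /p_elt (@pnat_dvd _ (p ^ k)) ?order_dvdn ?xpk //.
by rewrite pnatX pnat_id.
Qed.

Lemma logn_Ohm_Ldiv k : logn p #|'Ohm_k(G)| = logn p #|'Ldiv_(p ^ k)(G)|.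
Proof.
have /(Ohm_dprod k)/dprod_card <- := nilpotent_pcoreC p (abelian_nil cGG).
have p'Ohm : logn p #|'Ohm_k('O_p^'(G))| = 0%N.
  rewrite logn_coprime // prime_coprime // -p'natE //.
  exact: pgroupS (Ohm_sub k _) (pcore_pgroup _ _).
rewrite lognM ?cardG_gt0 // p'Ohm addn0 Ldiv_pcore (OhmEabelian (pcore_pgroup _ _)) //.
exact: abelianS (Ohm_sub _ _) (abelianS (pcore_sub _ _) cGG).
Qed.

End AbelianOhm.

Lemma abelian_isog_card_Ldiv (gT hT : finGroupType) (G : {group gT}) (H : {group hT}) :
    abelian G -> abelian H ->
    (forall p k, prime p -> #|'Ldiv_(p ^ k)(G)| = #|'Ldiv_(p ^ k)(H)|) ->
  G \isog H.
Proof.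
move=> cGG cHH eq_Ldiv; apply: abelian_isog_logn_Ohm => // p k p_pr.
by rewrite !logn_Ohm_Ldiv // eq_Ldiv.
Qed.

Definition prime_subgroups (gT : finGroupType) (K : {set gT}) :=
  [set L in subgroups K | prime #|L|].

Definition subgroup_chain (gT : finGroupType) (K : {set gT}) :=
  {in subgroups K &, forall L M : {group gT}, L \subset M \/ M \subset L}.

Section SubgroupLatticeInvariants.
Variable gT : finGroupType.
Implicit Types (K L C a b : {group gT}).

Lemma pgroup_prime_card (p : nat) a : p.-group a -> prime #|a| -> #|a| = p.
Proof. by move=> pa a_pr; apply/eqP; apply: (pgroupP pa) _ a_pr (dvdnn _). Qed.

Lemma subgroups_prime K : prime #|K| -> subgroups K = [set 1%G; K].
Proof.
move=> pK; apply/setP => L; rewrite !inE.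
apply/idP/orP => [sLK | [] /eqP-> //]; last exact: sub1G.
have /primeP[_ /(_ _ (cardSg sLK))/orP[oL | oL]] := pK.
  by left; apply/eqP/val_inj/card1_trivg/eqP.
by right; rewrite -val_eqE /= eqEcard sLK (eqP oL) leqnn.
Qed.

Lemma card_subgroups_eq2 K : (#|subgroups K| == 2) = prime #|K|.
Proof.
apply/idP/idP => [sub2 | pK]; last first.
  rewrite subgroups_prime // cards2; suff -> : 1%G != K by [].
  by apply: contraTneq pK => <-; rewrite cards1.
have [K1 | ntK] := eqsVneq K 1.
  suff : #|subgroups K| <= 1 by rewrite (eqP sub2).
  rewrite -(cards1 [1 gT]%G) subset_leq_card //; apply/subsetP => L.
  by rewrite !inE K1 subG1 => /eqP L1; apply/eqP/val_inj.
have q_pr : prime (pdiv #|K|) by rewrite pdiv_prime // ltnNge -trivg_card_le1.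
have [x Kx ox] := Cauchy q_pr (pdiv_dvd _).
suff -> : K :=: <[x]> by rewrite -orderE ox.
have two : subgroups K = [set 1%G; K].
  apply/eqP; rewrite eq_sym eqEcard (eqP sub2) cards2.
  rewrite (_ : 1%G != K) ?leqnn ?andbT; last by apply: contra ntK => /eqP<-.
  by apply/subsetP => L; rewrite !inE => /orP[] /eqP->; rewrite ?sub1G.
have : <[x]>%G \in subgroups K by rewrite inE cycle_subG.
rewrite two !inE => /orP[/eqP/(congr1 val) /= x1 | /eqP<- //].
by move: (prime_gt1 q_pr); rewrite -ox orderE x1 cards1.
Qed.

Lemma subgroup_chain_cyclic K : subgroup_chain K -> cyclic K.
Proof.
move=> chK; case: (@arg_maxnP _ 1 (fun z => z \in K) (fun x => #[x]) (group1 K)) => x Kx max_x.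
apply/cyclicP; exists x; apply/eqP; rewrite eqEsubset cycle_subG Kx andbT.
apply/subsetP => y Ky.
have sub_cycle z : z \in K -> <[z]>%G \in subgroups K by rewrite inE cycle_subG.
have [syx | sxy] := chK _ _ (sub_cycle y Ky) (sub_cycle x Kx); first by rewrite -cycle_subG.
have : <[x]> == <[y]> by rewrite eqEcard sxy -!orderE; apply: max_x.
by move/eqP->; apply: cycle_id.
Qed.

Lemma card_subgroups_cyclic_pfactor C p j : prime p -> cyclic C -> #|C| = (p ^ j)%N ->
  #|subgroups C| = j.+1.
Proof.
move=> p_pr /cyclicP[x ->] ox; rewrite -orderE in ox.
pose g (i : 'I_j.+1) := <[x ^+ (#[x] %/ p ^ i)]>%G.
have sub_g (i : 'I_j.+1) : [set H : {group gT} | H \subset <[x]> & #|H| == (p ^ i)%N] = [set g i].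
  by apply: cycle_sub_group; rewrite ox dvdn_exp2l // -ltnS.
have og i : #|g i| = (p ^ i)%N.
  by have := set11 (g i); rewrite -sub_g inE => /andP[_ /eqP].
suff -> : subgroups <[x]> = g @: setT.
  rewrite card_in_imset ?cardsT ?card_ord // => i i' _ _ eq_g.
  by apply/val_inj/(expnI (prime_gt1 p_pr)); rewrite /= -!og eq_g.
apply/setP => L; rewrite inE; apply/idP/imsetP => [sLx | [i _ ->]].
  have := cardSg sLx; rewrite -orderE ox => /(dvdn_pfactor _ _ p_pr)[i le_ij oL].
  by exists (Ordinal (le_ij : i < j.+1)) => //; apply/set1P; rewrite -sub_g inE sLx oL /=.
by have := set11 (g i); rewrite -sub_g inE => /andP[].
Qed.

Lemma cyclic_pfactor_chain C p j : prime p -> cyclic C -> #|C| = (p ^ j)%N ->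
  subgroup_chain C.
Proof.
move=> p_pr cC oC L M; rewrite !inE => sLC sMC.
have := cardSg sLC; rewrite oC => /(dvdn_pfactor _ _ p_pr)[l _ oL].
have := cardSg sMC; rewrite oC => /(dvdn_pfactor _ _ p_pr)[m _ oM].
rewrite -(cardSg_cyclic cC sLC sMC) -(cardSg_cyclic cC sMC sLC) oL oM.
by rewrite !dvdn_Pexp2l ?prime_gt1 //; case/orP: (leq_total l m) => ->; [left | right].
Qed.

Lemma cyclic_pfactorE C p j : prime p ->
  cyclic C /\ #|C| = (p ^ j)%N <->
  [/\ subgroup_chain C, #|subgroups C| = j.+1 & {in prime_subgroups C, forall a, #|a| = p}].
Proof.
move=> p_pr; split=> [[cC oC] | [chC subC prime_p]].
  split; [exact: cyclic_pfactor_chain oC | exact: card_subgroups_cyclic_pfactor oC |].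
  move=> a; rewrite !inE => /andP[saC pa]; apply: pgroup_prime_card pa.
  by apply: pgroupS saC _; rewrite /pgroup oC pnatX pnat_id.
have cC := subgroup_chain_cyclic chC.
have pC : p.-group C.
  apply/pgroupP => q q_pr /(Cauchy q_pr)[x Cx ox].
  by rewrite -ox orderE prime_p ?inE // cycle_subG Cx -orderE ox.
have oC := card_pgroup pC; split=> //.
by move: subC; rewrite (card_subgroups_cyclic_pfactor p_pr cC oC) => -[<-].
Qed.

Lemma card_Ldiv_sum_totient (X : {group gT}) m :
  #|'Ldiv_m(X)| = \sum_(C in [set C in subgroups X | cyclic C && (#|C| %| m)]) totient #|C|.
Proof.
pose S := [set C in subgroups X | cyclic C && (#|C| %| m)].
rewrite -sum1_card (partition_big (fun x => <[x]>%G) (mem S)) /=; last first.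
  by move=> x /LdivP[Xx xm]; rewrite !inE cycle_subG Xx cycle_cyclic -orderE order_dvdn xm /=.
apply: eq_bigr => C; rewrite !inE => /and3P[sCX /cyclicP[c defC] dvd_C_m].
rewrite sum1dep_card defC -orderE totient_gen; apply: eq_card => x; rewrite !inE /generator.
rewrite -val_eqE /= -defC; apply/andP/eqP => [[_ /eqP <-] // | def_x].
by rewrite -cycle_subG -order_dvdn orderE -def_x sCX dvd_C_m.
Qed.

Lemma prime_subgroups_prime a : prime #|a| -> prime_subgroups a = [set a].
Proof.
move=> pa; apply/setP => L; rewrite /prime_subgroups subgroups_prime // !inE.
apply/andP/eqP => [[/orP[/eqP-> | /eqP//]] | ->]; last by rewrite eqxx orbT.
by rewrite cards1.
Qed.

Lemma card_prime_subgroups_join_pelem p a b : prime p -> b \subset 'C(a) ->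
  #|a| = p -> #|b| = p -> a :!=: b -> #|prime_subgroups (a <*> b)| = p.+1.
Proof.
move=> p_pr cab oa ob neq_ab.
have tiab : a :&: b = 1.
  apply: prime_TIg; first by rewrite oa.
  by apply: contra neq_ab => sab; rewrite eqEcard sab oa ob leqnn.
have dab : a \x b = a <*> b := dprodEY cab tiab.
have abelD : p.-abelem (a <*> b) by rewrite (dprod_abelem p dab) !prime_abelem.
have Ep2 : (a <*> b)%G \in 'E_p^2(a <*> b).
  by apply/pnElemP; split; rewrite // -(dprod_card dab) oa ob mulnn pfactorK.
rewrite -(card_p1Elem_p2Elem Ep2) p1ElemE //; apply: eq_card => L; rewrite !inE.
apply: andb_id2l => sLD; apply/idP/eqP => [pL | ->//].
exact: pgroup_prime_card (pgroupS sLD (abelem_pgroup abelD)) pL.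
Qed.

Lemma card_prime_subgroups_join_coprime a b : b \subset 'C(a) ->
  prime #|a| -> prime #|b| -> #|a| != #|b| -> #|prime_subgroups (a <*> b)| <= 2.
Proof.
move=> cab pa pb neq_ab.
have co_ab : coprime #|a| #|b| by rewrite prime_coprime // dvdn_prime2.
have defD : a <*> b = a * b := cent_joinEr cab.
have cD : cyclic (a <*> b) by rewrite defD cyclicM ?prime_cyclic.
have oD : #|a <*> b| = (#|a| * #|b|)%N by rewrite defD TI_cardMg ?coprime_TIg.
apply: leq_trans (_ : #|[set a; b]| <= 2); last by rewrite cards2; case: (a != b).
apply/subset_leq_card/subsetP => L; rewrite !inE => /andP[sLD pL].
have := cardSg sLD; rewrite oD Euclid_dvdM // !dvdn_prime2 // => /orP[] oL; apply/orP.
  by left; rewrite -val_eqE /= (eq_subG_cyclic cD) ?(eqP oL) ?joing_subl.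
by right; rewrite -val_eqE /= (eq_subG_cyclic cD) ?(eqP oL) ?joing_subr.
Qed.

End SubgroupLatticeInvariants.

(* For abelian X: no nontrivial Sylow subgroup of X is cyclic. *)
Definition twin_prime_subgroups (gT : finGroupType) (X : {set gT}) :=
  forall a : {group gT}, a \subset X -> prime #|a| ->
  exists b : {group gT}, [/\ b \subset X, #|b| = #|a| & b :!=: a].

Section PrimeOrderInLattice.
Variables (gT : finGroupType) (X : {group gT}).
Hypothesis cXX : abelian X.
Implicit Types a b : {group gT}.

Lemma twin_join_prime_subgroups a : twin_prime_subgroups X ->
    a \subset X -> prime #|a| ->
  exists b, [/\ b \subset X, prime #|b| & #|prime_subgroups (a <*> b)| = #|a|.+1].
Proof.
move=> twinX saX pa; have [b [sbX oba neq_ba]] := twinX a saX pa.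
exists b; split; rewrite ?oba //.
apply: card_prime_subgroups_join_pelem; rewrite 1?eq_sym //.
exact: subset_trans sbX (sub_abelian_cent cXX saX).
Qed.

Lemma card_from_join_prime_subgroups a b p : a \subset X -> b \subset X ->
    prime #|a| -> prime #|b| -> prime p ->
  #|prime_subgroups (a <*> b)| = p.+1 -> #|a| = p.
Proof.
move=> saX sbX pa pb p_pr.
have cab : b \subset 'C(a) := subset_trans sbX (sub_abelian_cent cXX saX).
have [<- | neq_ab] := eqVneq a b.
  rewrite (joing_idPl (subxx a)) prime_subgroups_prime // cards1 => -[p0].
  by rewrite -p0 in p_pr.
have [eq_ab | neq_o] := eqVneq #|a| #|b|.
  by rewrite (card_prime_subgroups_join_pelem pa cab) // => -[].
move=> natoms; have := card_prime_subgroups_join_coprime cab pa pb neq_o.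
by rewrite natoms ltnS leqNgt prime_gt1.
Qed.

End PrimeOrderInLattice.

Section SubgroupLatticeIso.
Variables (aT bT : finGroupType) (A : {group aT}) (B : {group bT}).
Variable f : {group aT} -> {group bT}.
Hypotheses (inj_f : {in subgroups A &, injective f})
  (im_f : f @: subgroups A = subgroups B)
  (fI : {in subgroups A &, forall K L : {group aT}, f (K :&: L)%G = (f K :&: f L)%G})
  (fY : {in subgroups A &, forall K L : {group aT}, f (K <*> L)%G = (f K <*> f L)%G}).
Implicit Types (K L C a : {group aT}) (M : {group bT}).

Lemma lattice_iso_sub K : K \subset A -> f K \subset B.
Proof.
move=> sKA; have : f K \in f @: subgroups A by apply: imset_f; rewrite inE.
by rewrite im_f inE.
Qed.

Lemma lattice_iso_onto M : M \subset B -> exists2 K : {group aT}, K \subset A & M = f K.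
Proof.
move=> sMB; have : M \in f @: subgroups A by rewrite im_f inE.
by case/imsetP => K; rewrite inE => sKA ->; exists K.
Qed.

Lemma lattice_iso_subset K L : K \subset A -> L \subset A ->
  (f K \subset f L) = (K \subset L).
Proof.
move=> sKA sLA; have [KA LA] : K \in subgroups A /\ L \in subgroups A by rewrite !inE.
have KLA : (K :&: L)%G \in subgroups A by rewrite inE subIset ?sKA.
have /(congr1 val) /= fKL := fI KA LA.
rewrite !(sameP setIidPl eqP) -fKL.
change ((f (K :&: L)%G == f K :> {set bT}) = ((K :&: L)%G == K :> {set aT})).
by rewrite !val_eqE (inj_in_eq inj_f).
Qed.

Lemma lattice_iso_subgroups K : K \subset A -> f @: subgroups K = subgroups (f K).
Proof.
move=> sKA; apply/setP => M; rewrite inE; apply/imsetP/idP => [[L] | sMfK].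
  by rewrite inE => sLK ->; rewrite lattice_iso_subset // (subset_trans sLK).
have [L sLA defM] := lattice_iso_onto (subset_trans sMfK (lattice_iso_sub sKA)).
by exists L; rewrite // inE -(lattice_iso_subset sLA sKA) -defM.
Qed.

Lemma card_subgroups_lattice_iso K : K \subset A -> #|subgroups (f K)| = #|subgroups K|.
Proof.
move=> sKA; rewrite -lattice_iso_subgroups // card_in_imset // => L M.
by rewrite !inE => sLK sMK; apply: inj_f; rewrite inE (subset_trans _ sKA).
Qed.

Lemma prime_card_lattice_iso K : K \subset A -> prime #|f K| = prime #|K|.
Proof. by move=> sKA; rewrite -!card_subgroups_eq2 card_subgroups_lattice_iso. Qed.

Lemma lattice_iso_prime_subgroups K : K \subset A ->
  f @: prime_subgroups K = prime_subgroups (f K).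
Proof.
move=> sKA; apply/setP => M; rewrite inE -lattice_iso_subgroups //.
apply/imsetP/andP => [[L] | [/imsetP[L]]].
  rewrite !inE => /andP[sLK pL] ->; split; first by apply: imset_f; rewrite inE.
  by rewrite prime_card_lattice_iso // (subset_trans sLK).
rewrite inE => sLK -> pfL; exists L => //.
by rewrite !inE sLK -prime_card_lattice_iso // (subset_trans sLK).
Qed.

Lemma card_prime_subgroups_lattice_iso K : K \subset A ->
  #|prime_subgroups (f K)| = #|prime_subgroups K|.
Proof.
move=> sKA; rewrite -lattice_iso_prime_subgroups // card_in_imset // => L M.
by rewrite !inE => /andP[sLK _] /andP[sMK _]; apply: inj_f; rewrite inE (subset_trans _ sKA).
Qed.

Lemma subgroup_chain_lattice_iso K : K \subset A ->
  subgroup_chain (f K) <-> subgroup_chain K.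
Proof.
move=> sKA; split=> chK L M.
  rewrite !inE => sLK sMK; have [sLA sMA] := (subset_trans sLK sKA, subset_trans sMK sKA).
  by rewrite -!(lattice_iso_subset sLA sMA) -(lattice_iso_subset sMA sLA); apply: chK;
    rewrite inE lattice_iso_subset.
rewrite -!lattice_iso_subgroups // => /imsetP[L' L'K ->] /imsetP[M' M'K ->].
move: L'K M'K; rewrite !inE => sLK sMK; have [sLA sMA] := (subset_trans sLK sKA, subset_trans sMK sKA).
by rewrite !lattice_iso_subset //; apply: chK; rewrite inE.
Qed.

Hypotheses (cAA : abelian A) (cBB : abelian B) (twinA : twin_prime_subgroups A).

Lemma card_prime_lattice_iso a : a \subset A -> prime #|a| -> #|f a| = #|a|.
Proof.
move=> saA pa; have [b [sbA pb natoms]] := twin_join_prime_subgroups cAA twinA saA pa.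
apply: (card_from_join_prime_subgroups cBB (lattice_iso_sub saA) (lattice_iso_sub sbA)) => //.
- by rewrite prime_card_lattice_iso.
- by rewrite prime_card_lattice_iso.
have /(congr1 val) /= fab : f (a <*> b)%G = (f a <*> f b)%G by apply: fY; rewrite inE.
by rewrite -fab card_prime_subgroups_lattice_iso // join_subG saA.
Qed.

Lemma cyclic_pfactor_lattice_iso C p j : C \subset A -> prime p ->
  cyclic (f C) /\ #|f C| = (p ^ j)%N <-> cyclic C /\ #|C| = (p ^ j)%N.
Proof.
move=> sCA p_pr.
have card_f : {in prime_subgroups C, forall a, #|f a| = #|a|}.
  move=> a; rewrite !inE => /andP[saC pa].
  exact: card_prime_lattice_iso (subset_trans saC sCA) pa.
split=> /(cyclic_pfactorE _ _ p_pr)[chC subC prime_p]; apply/(cyclic_pfactorE _ _ p_pr).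
  split; first exact/(subgroup_chain_lattice_iso sCA).
    by rewrite -card_subgroups_lattice_iso.
  move=> a Ca; rewrite -card_f // prime_p // -lattice_iso_prime_subgroups //.
  exact: imset_f.
split; first exact/(subgroup_chain_lattice_iso sCA).
  by rewrite card_subgroups_lattice_iso.
move=> M; rewrite -lattice_iso_prime_subgroups // => /imsetP[a Ca ->].
by rewrite card_f // prime_p.
Qed.

Lemma card_Ldiv_lattice_iso p k : prime p ->
  #|'Ldiv_(p ^ k)(B)| = #|'Ldiv_(p ^ k)(A)|.
Proof.
move=> p_pr; rewrite !card_Ldiv_sum_totient.
have cyclic_image C : C \subset A -> cyclic C -> #|C| %| p ^ k ->
    cyclic (f C) /\ #|f C| = #|C|.
  move=> sCA cC /(dvdn_pfactor _ _ p_pr)[j _ oC].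
  by have [] := (cyclic_pfactor_lattice_iso j sCA p_pr).2 (conj cC oC); rewrite oC.
have cyclic_preimage C : C \subset A -> cyclic (f C) -> #|f C| %| p ^ k ->
    cyclic C /\ #|C| = #|f C|.
  move=> sCA cfC /(dvdn_pfactor _ _ p_pr)[j _ ofC].
  by have [] := (cyclic_pfactor_lattice_iso j sCA p_pr).1 (conj cfC ofC); rewrite ofC.
set SA := [set C in subgroups A | _].
have -> : [set D in subgroups B | cyclic D && (#|D| %| p ^ k)] = f @: SA.
  apply/setP => D; rewrite !inE; apply/andP/imsetP => [[sDB /andP[cD dD]] | [C]].
    have [C sCA defD] := lattice_iso_onto sDB; rewrite defD in cD dD *.
    have [cC oC] := cyclic_preimage C sCA cD dD.
    by exists C; rewrite // !inE sCA cC oC.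
  rewrite !inE => /and3P[sCA cC dC] ->; have [cfC ofC] := cyclic_image C sCA cC dC.
  by rewrite lattice_iso_sub // cfC ofC.
rewrite big_imset /=; last first.
  by move=> C D; rewrite !inE => /andP[sCA _] /andP[sDA _]; apply: inj_f; rewrite inE.
apply: eq_bigr => C; rewrite !inE => /and3P[sCA cC dC].
by have [_ ->] := cyclic_image C sCA cC dC.
Qed.

End SubgroupLatticeIso.

Section DirectPower.
Variables (gT : finGroupType) (G : {group gT}) (n : nat).

Lemma in_gpow x : (x \in gpow G n) = [forall i, x i \in G].
Proof. exact: in_setXn. Qed.

Lemma card_gpow : #|gpow G n| = (#|G| ^ n)%N.
Proof. by rewrite cardsXn prod_nat_const card_ord. Qed.

Lemma expg_dffun (x : {dffun 'I_n -> gT}) m i : (x ^+ m) i = x i ^+ m.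
Proof. by elim: m => [|m IH]; rewrite ?oneg_ffun // !expgS mulg_ffun IH. Qed.

Lemma abelian_gpow : abelian G -> abelian (gpow G n).
Proof.
move=> cGG; apply/centsP => x; rewrite in_gpow => /forallP Gx y.
rewrite in_gpow => /forallP Gy; apply/ffunP => i; rewrite !mulg_ffun.
exact: (centsP cGG).
Qed.

Lemma card_Ldiv_gpow m : #|'Ldiv_m(gpow G n)| = (#|'Ldiv_m(G)| ^ n)%N.
Proof.
suff -> : 'Ldiv_m(gpow G n) = setXn (fun _ : 'I_n => 'Ldiv_m(G)).
  by rewrite cardsXn prod_nat_const card_ord.
apply/setP => x; rewrite in_setXn; apply/LdivP/forallP => [[Gx xm] i | Lx].
  apply/LdivP; split; last by rewrite -expg_dffun xm oneg_ffun.
  by move: Gx; rewrite in_gpow => /forallP.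
split; first by rewrite in_gpow; apply/forallP => i; case/LdivP: (Lx i).
by apply/ffunP => i; rewrite expg_dffun oneg_ffun; case/LdivP: (Lx i).
Qed.

Lemma twin_prime_subgroups_gpow : 1 < n -> twin_prime_subgroups (gpow G n).
Proof.
move=> n_gt1 a sa pa; have /cyclicP[x def_a] := prime_cyclic pa.
have : x \in gpow G n by rewrite -cycle_subG -def_a.
rewrite in_gpow => /forallP Gx.
have [i0 nt_xi0] : exists i0, x i0 != 1.
  apply/existsP; apply: contraLR pa => /existsPn x1.
  suff x_1 : x = 1 by rewrite def_a x_1 cycle1 cards1.
  by apply/ffunP => i; rewrite oneg_ffun; apply/eqP/negbNE/x1.
have [i1 ne_i1i0] : exists i1, i1 != i0.
  have : 0 < #|[set~ i0]| by rewrite cardsC1 card_ord -subn1 subn_gt0.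
  by case/card_gt0P => i1; rewrite !inE; exists i1.
have o_xi0 : #[x i0] = #|a|.
  rewrite def_a -orderE; apply/prime_nt_dvdP; first by rewrite orderE -def_a.
    by rewrite order_eq1.
  by rewrite order_dvdn -expg_dffun expg_order oneg_ffun.
pose y := @dfung1 _ (fun=> gT) i1 (x i0).
exists <[y]>%G; split.
- rewrite cycle_subG in_gpow; apply/forallP => j.
  by have [<-|ne_i1j] := eqVneq i1 j; rewrite ?dfung1_id ?dfung1_dflt.
- by rewrite -orderE order_injm ?injm_dfung1 ?inE.
apply/eqP => eq_ya; have /cycleP[m x_ym] : x \in <[y]> by rewrite eq_ya def_a cycle_id.
by move: nt_xi0; rewrite x_ym expg_dffun dfung1_dflt // => /eqP[]; apply: expg1n.
Qed.
End DirectPower.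

Lemma isog_gpow (gT hT : finGroupType) (G : {group gT}) (H : {group hT}) n :
  G \isog H -> gpow G n \isog gpow H n.
Proof.
case/isogP => f inj_f fG.
pose fn (x : {dffun 'I_n -> gT}) : {dffun 'I_n -> hT} := [ffun i => f (x i)].
have fnM : {in gpow G n &, {morph fn : x y / x * y}}.
  move=> x y; rewrite !in_gpow => /forallP Gx /forallP Gy; apply/ffunP => i.
  by rewrite !ffunE morphM ?Gx ?Gy.
have inj_fn : 'injm (Morphism fnM).
  apply/injmP => x y; rewrite !in_gpow => /forallP Gx /forallP Gy /ffunP eq_fxy.
  by apply/ffunP => i; have := eq_fxy i; rewrite !ffunE; apply: (injmP inj_f).
apply/isogP; exists (Morphism fnM) => //; apply/eqP; rewrite eqEcard.
rewrite card_injm // !card_gpow -fG card_injm // leqnn andbT.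
rewrite morphimEdom; apply/subsetP => _ /imsetP[x + ->]; rewrite !in_gpow => /forallP Gx.
by apply/forallP => i; rewrite ffunE -fG mem_morphim ?Gx.
Qed.

Lemma isog_subgroup_lattice_iso (aT bT : finGroupType) (A : {group aT}) (B : {group bT}) :
  A \isog B -> subgroup_lattice_iso A B.
Proof.
case/isogP => f inj_f fA; exists (fun K => (f @* K)%G); split.
- move=> K L; rewrite !inE => sKA sLA /(congr1 val) /= eq_fKL.
  exact/val_inj/(injm_morphim_inj inj_f sKA sLA).
- apply/setP => M; rewrite inE; apply/imsetP/idP => [[K] | sMB].
    by rewrite inE => sKA ->; rewrite -fA morphimS.
  exists (f @*^-1 M)%G; first by rewrite inE morphpre_sub.
  by apply: val_inj; rewrite /= morphpreK // fA.
- by move=> K L _ _; apply: val_inj; apply: injmI.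
by move=> K L; rewrite !inE => sKA sLA; apply: val_inj; apply: morphimY.
Qed.

Lemma subgroup_lattice_iso_gpow_isog (gT hT : finGroupType) (G : {group gT}) (H : {group hT}) n :
  abelian G -> abelian H -> 1 < n -> subgroup_lattice_iso (gpow G n) (gpow H n) -> G \isog H.
Proof.
move=> cGG cHH n_gt1 [f [inj_f im_f fI fY]].
apply: abelian_isog_card_Ldiv => // p k p_pr; apply/eqP.
rewrite -(eqn_exp2r _ _ (ltnW n_gt1)) -!card_Ldiv_gpow.
by rewrite (card_Ldiv_lattice_iso inj_f im_f fI fY (abelian_gpow n cGG) (abelian_gpow n cHH)
  (twin_prime_subgroups_gpow n_gt1)).
Qed.

Unset Implicit Arguments.
Local Close Scope group_scope.

Theorem theorem2 (gT hT : finGroupType) (G : {group gT}) (H : {group hT})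
    (abG : abelian G) (abH : abelian H) :
  G \isog H <->
  exists n : nat, (2 <= n)%N /\ subgroup_lattice_iso (gpow G n) (gpow H n).
Proof.
split=> [isoGH | [n [n_gt1 latGH]]]; last exact: subgroup_lattice_iso_gpow_isog latGH.
by exists 2; split=> //; apply/isog_subgroup_lattice_iso/isog_gpow.
Qed.
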